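(* Consider the setting: $x_l=\theta+\sigma\eta_l$ with $\theta\in(0,\theta_R]$, $\sigma>0$, $\eta_l$ i.i.d. symmetric about zero with real characteristic function $\varphi_\eta$; power $P>0$, channel noise variance $\sigma_\nu^2\ge 0$, and design parameter $\omega\in(0,2\pi/\theta_R]$. Define $\mathrm{AsV}_{\hat\theta}(\omega)=\dfrac{P+\sigma_\nu^2-P\varphi_\eta(2\sigma\omega)}{2P\omega^2\varphi_\eta^2(\sigma\omega)}$, $\mathrm{AsV}_{\hat\sigma}(\omega)=\dfrac{P+\sigma_\nu^2-2P\varphi_\eta^2(\sigma\omega)+P\varphi_\eta(2\sigma\omega)}{2P\left[\frac{\partial\varphi_\eta(\sigma\omega)}{\partial\sigma}\right]^2}$, and, with $\gamma=\theta^2/\sigma^2$, $\mathrm{AsV}_{\hat\gamma}(\omega)=\dfrac{4\gamma}{\sigma^2}\left[\mathrm{AsV}_{\hat\theta}(\omega)+\gamma\,\mathrm{AsV}_{\hat\sigma}(\omega)\right]$. Let $\omega_\theta^*,\omega_\sigma^*,\omega_\gamma^*$ denote the minimizers over $\omega\in(0,2\pi/\theta_R]$ (understood as the limiting endpoint $0$ when the infimum is approached as $\omega\to0$) of $\mathrm{AsV}_{\hat\theta}$, $\mathrm{AsV}_{\hat\sigma}$, $\mathrm{AsV}_{\hat\gamma}$ respectively. If $\mathrm{AsV}_{\hat\theta}$ and $\mathrm{AsV}_{\hat\sigma}$ are differentiable quasi-convex functions of $\omega$ on $(0,2\pi/\theta_R]$, then $\omega_\gamma^*$ lies between $\omega_\theta^*$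 and $\omega_\sigma^*$.
   Context: A univariate function $f$ on $(0,2\pi/\theta_R]$ is called quasi-convex if either (c1) $f$ is monotone (non-decreasing or non-increasing), or (c2) $f$ has a global minimum at some $\omega^*$ such that $f$ is non-increasing for $\omega\le\omega^*$ and non-decreasing for $\omega\ge\omega^*$. *)

From HB Require Import structures.
From mathcomp Require Import all_boot all_order all_algebra.
From mathcomp Require Import all_classical all_reals all_analysis.
Set Implicit Arguments. Unset Strict Implicit. Unset Printing Implicit Defensive.
Import Order.TTheory GRing.Theory Num.Theory.
Import numFieldNormedType.Exports.
Local Open Scope classical_set_scope.
Local Open Scope ring_scope.

Definition symmetric_law (R : realType) (P : probability R R) : Prop :=
  forall A : set R, measurable A -> P ((fun x => - x) @^-1` A) = P A.

(* Real characteristic function of a symmetric law: E[cos (t eta)]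
   (= E[exp(i t eta)] since the imaginary part vanishes by symmetry). *)
Definition charfun (R : realType) (P : probability R R) (t : R) : R :=
  \int[P]_x cos (t * x).

Definition AsV_theta (R : realType) (P : probability R R)
    (sigma Pw snu2 : R) (w : R) : R :=
  (Pw + snu2 - Pw * charfun P (2 * sigma * w)) /
  (2 * Pw * w ^+ 2 * (charfun P (sigma * w)) ^+ 2).

Definition dphi_dsigma (R : realType) (P : probability R R) (sigma w : R) : R :=
  derive1 (fun s => charfun P (s * w)) sigma.

Definition AsV_sigma (R : realType) (P : probability R R)
    (sigma Pw snu2 : R) (w : R) : R :=
  (Pw + snu2 - 2 * Pw * (charfun P (sigma * w)) ^+ 2
      + Pw * charfun P (2 * sigma * w)) /
  (2 * Pw * (dphi_dsigma P sigma w) ^+ 2).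

Definition AsV_gamma (R : realType) (P : probability R R)
    (theta sigma Pw snu2 : R) (w : R) : R :=
  let gamma := theta ^+ 2 / sigma ^+ 2 in
  4 * gamma / sigma ^+ 2 *
    (AsV_theta P sigma Pw snu2 w + gamma * AsV_sigma P sigma Pw snu2 w).

Definition quasi_convex_on (R : realType) (W : R) (f : R -> R) : Prop :=
  (forall x y, 0 < x -> x <= y -> y <= W -> f x <= f y)
  \/ (forall x y, 0 < x -> x <= y -> y <= W -> f y <= f x)
  \/ (exists2 ws, 0 < ws <= W &
        (forall x, 0 < x <= W -> f ws <= f x)
        /\ (forall x y, 0 < x -> x <= y -> y <= ws -> f y <= f x)
        /\ (forall x y, ws <= x -> x <= y -> y <= W -> f x <= f y)).

(* m is a minimizer of f over (0, W]: either an attained minimum in (0, W],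
   or m = 0 when the infimum over (0, W] is approached as omega -> 0+
   (i.e. limsup_{omega -> 0+} f omega <= inf_{(0,W]} f). *)
Definition is_minimizer (R : realType) (W : R) (f : R -> R) (m : R) : Prop :=
  (0 < m <= W /\ forall x, 0 < x <= W -> f m <= f x)
  \/ (m = 0 /\ forall x, 0 < x <= W -> forall e : R, 0 < e ->
        exists2 d : R, 0 < d & forall y, 0 < y -> y < d -> y <= W ->
          f y <= f x + e).

(* Quasi-convexity makes each of AsV_theta and AsV_sigma nonincreasing up to
   its minimizer and nondecreasing after it.  AsV_gamma is a positive
   combination of the two, so it is nonincreasing left of both minimizers and
   nondecreasing right of both; its infimum over (0, W] is thus reached between
   them.  When both minimizers are positive this is the extreme value theorem
   on the closed interval they span.  When the left one is the endpoint 0, the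
   nondecreasing summand is almost constant near 0+, so either the minimum over
   (0, b] is attained or the infimum is approached as omega -> 0+.  The
   characteristic-function hypotheses only enter through AsV_theta, AsV_sigma
   >= 0 (from phi <= 1 and 2 phi(t)^2 - 1 <= phi(2t)), and differentiability
   only through continuity. *)

From HB Require Import structures.
From mathcomp Require Import all_boot all_order all_algebra.
From mathcomp Require Import all_classical all_reals all_analysis.
From mathcomp Require Import measurable_realfun ring lra.
Set Implicit Arguments.
Unset Strict Implicit.
Unset Printing Implicit Defensive.
Import Order.TTheory GRing.Theory Num.Theory.
Import numFieldNormedType.Exports.
Local Open Scope classical_set_scope.
Local Open Scope ring_scope.

Section CharFun.
Variables (R : realType) (P : probability R R).

Lemma bounded_continuous_integrable (g : R -> R) (M : R) :
  continuous g -> (forall x, `|g x| <= M) -> P.-integrable setT (EFin \o g).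
Proof.
move=> cg gM; apply: measurable_bounded_integrable => //.
- exact: (le_lt_trans (probability_le1 P measurableT) (ltry 1)).
- exact: continuous_measurable_fun.
- exists M; split; first by rewrite num_real.
  by move=> y My x _; exact: le_trans (gM x) (ltW My).
Qed.

Lemma cos_scale_continuous (t : R) : continuous (fun x : R => cos (t * x)).
Proof.
by move=> x; apply: continuous_comp; [exact: cvgMr | exact: continuous_cos].
Qed.

Lemma affine_cos_integrable (u b k : R) :
  P.-integrable setT (EFin \o (fun x => b * cos (u * x) + k)).
Proof.
apply: (@bounded_continuous_integrable _ (`|b| + `|k|)).
  move=> x; apply: cvgD; last exact: cvg_cst.
  by apply: cvgM; [exact: cvg_cst | exact: cos_scale_continuous].
move=> x; apply: le_trans (ler_normD _ _) _; rewrite lerD2r normrM ler_piMr //.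
by rewrite ler_norml cos_le1 cos_geN1.
Qed.

Lemma Rintegral_affine_cos (u b k : R) :
  \int[P]_x (b * cos (u * x) + k) = b * charfun P u + k.
Proof.
have cos_int : P.-integrable setT (EFin \o (fun x => cos (u * x))).
  apply: (eq_integrable measurableT _ _ _ (affine_cos_integrable u 1 0)).
  by move=> x _ /=; rewrite mul1r addr0.
have cst_int : P.-integrable setT (EFin \o (fun _ : R => k)).
  by apply: (@bounded_continuous_integrable _ `|k|) => // x; exact: cvg_cst.
rewrite RintegralD //; last first.
  apply: (eq_integrable measurableT _ _ _ (affine_cos_integrable u b 0)).
  by move=> x _ /=; rewrite addr0.
rewrite RintegralZl // Rintegral_cst // (_ : fine _ = 1) ?mulr1 //.
exact: (congr1 fine (probability_setT P)).
Qed.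

Lemma charfun_le1 (t : R) : charfun P t <= 1.
Proof.
have := le_Rintegral measurableT (affine_cos_integrable t 1 0)
  (affine_cos_integrable t 0 1).
rewrite !Rintegral_affine_cos mul1r mul0r !add0r addr0; apply=> x _.
by rewrite mul1r mul0r addr0 add0r cos_le1.
Qed.

Lemma cos_mul2l (t x : R) : cos (2 * t * x) = 2 * cos (t * x) ^+ 2 - 1.
Proof.
rewrite -mulrA mulr_natl mulr2n cosD.
by have := cos2Dsin2 (t * x); rewrite -!expr2; lra.
Qed.

(* The variance of [cos (t eta)] is nonnegative, rewritten with the
   double-angle formula. *)
Lemma charfun_mul2_ge (t : R) : 2 * charfun P t ^+ 2 - 1 <= charfun P (2 * t).
Proof.
set phi := charfun P t.
have var_ge0 : 0 <= \int[P]_x ((cos (t * x) - phi) ^+ 2).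
  by apply: Rintegral_ge0 => x _; exact: sqr_ge0.
have var_expand : \int[P]_x ((cos (t * x) - phi) ^+ 2) =
    \int[P]_x ((2^-1 * cos (2 * t * x) + 0)
               + ((-2 * phi) * cos (t * x) + (2^-1 + phi ^+ 2))).
  by apply: eq_Rintegral => x _; rewrite cos_mul2l; field.
move: var_ge0; rewrite var_expand RintegralD ?affine_cos_integrable //.
rewrite !Rintegral_affine_cos -/phi; lra.
Qed.

End CharFun.

Lemma AsV_theta_ge0 (R : realType) (P : probability R R) (sigma Pw snu2 w : R) :
  0 <= Pw -> 0 <= snu2 -> 0 <= AsV_theta P sigma Pw snu2 w.
Proof.
move=> Pw0 snu20; rewrite /AsV_theta divr_ge0 ?(sqr_ge0, mulr_ge0) //.
by have := @charfun_le1 R P (2 * sigma * w); nra.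
Qed.

Lemma AsV_sigma_ge0 (R : realType) (P : probability R R) (sigma Pw snu2 w : R) :
  0 <= Pw -> 0 <= snu2 -> 0 <= AsV_sigma P sigma Pw snu2 w.
Proof.
move=> Pw0 snu20; rewrite /AsV_sigma divr_ge0 ?(sqr_ge0, mulr_ge0) //.
by have := @charfun_mul2_ge R P (sigma * w); rewrite mulrA; nra.
Qed.

Section MinimizerOnHalfOpenInterval.
Variables (R : realType) (W : R).
Hypothesis W_gt0 : 0 < W.

Definition unimodal_at (f : R -> R) (m : R) :=
  (forall x y, 0 < x -> x <= y -> y <= m -> y <= W -> f y <= f x) /\
  (forall x y, 0 < x -> m <= x -> x <= y -> y <= W -> f x <= f y).

Definition limsup0_le (f : R -> R) (v : R) :=
  forall e : R, 0 < e -> exists2 d : R, 0 < d &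
    forall y, 0 < y -> y < d -> y <= W -> f y <= v + e.

Definition nearly_nonincreasing0 (f : R -> R) :=
  forall e : R, 0 < e -> exists2 d : R, 0 < d &
    forall x y, 0 < x -> x <= y -> y < d -> f y <= f x + e.

Lemma is_minimizer_ge0_le f m : is_minimizer W f m -> 0 <= m <= W.
Proof.
by case=> [[/andP[m0 mW] _]|[-> _]]; rewrite ?(ltW m0) ?mW ?lexx ?ltW.
Qed.

Lemma quasi_convex_unimodal f :
  quasi_convex_on W f -> exists m, unimodal_at f m.
Proof.
case=> [inc|[dec|[m _ [_ [dec inc]]]]].
- by exists 0; split=> [x y x0 xy y0|x y x0 _]; [lra | exact: inc].
- exists W; split=> [x y x0 xy _ yW|x y _ Wx xy yW]; first exact: dec.
  by have -> : y = x by lra.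
- exists m; split=> [x y x0 xy ym _|x y _ mx xy yW]; [exact: dec | exact: inc].
Qed.

Lemma le_limsup0 f x v : 0 < x -> x <= W ->
  (forall z, 0 < z -> z <= x -> f x <= f z) -> limsup0_le f v -> f x <= v.
Proof.
move=> x0 xW fdec flim; apply/ler_addgt0Pr => e e0.
have [d d0 fd] := flim e e0.
pose z := Num.min x (d / 2).
have z0 : 0 < z by rewrite lt_min x0 divr_gt0.
have zx : z <= x by rewrite ge_min lexx.
have zd : z < d by rewrite gt_min; apply/orP; right; lra.
exact: le_trans (fdec z z0 zx) (fd z z0 zd (le_trans zx xW)).
Qed.

Lemma unimodal_at_minimizer f m0 m :
  unimodal_at f m0 -> is_minimizer W f m -> unimodal_at f m.
Proof.
move=> [dec inc] [[/andP[m_gt0 mW] fm_min]|[-> flim]].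
- split=> [x y x0 xy ym yW|x y x0 mx xy yW].
  + have [ym0|m0y] := leP y m0; first exact: dec.
    have y0 : 0 < y by lra.
    apply: le_trans (inc y m y0 (ltW m0y) ym mW) _; apply: fm_min; lra.
  + have [m0x|xm0] := leP m0 x; first exact: inc.
    have xW : x <= W by lra.
    apply: le_trans (dec m x m_gt0 mx (ltW xm0) xW) _; apply: fm_min; lra.
- split=> [x y x0 xy y0|x y x0 _ xy yW]; first lra.
  have [m0x|xm0] := leP m0 x; first exact: inc.
  have y0W : 0 < y <= W by rewrite (lt_le_trans x0 xy) yW.
  apply: le_limsup0 (flim y y0W) => [||z z0 zx]; [lra | lra |].
  by apply: dec => //; lra.
Qed.

Lemma is_minimizer_of_min_on_left h p b : 0 < p <= b -> b <= W ->
  (forall q, 0 < q <= b -> h p <= h q) ->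
  (forall x y, 0 < x -> b <= x -> x <= y -> y <= W -> h x <= h y) ->
  is_minimizer W h p.
Proof.
move=> /andP[p0 pb] bW hp hinc; left; split=> [|x /andP[x0 xW]]; first lra.
have [xb|bx] := leP x b; first by apply: hp; rewrite x0.
apply: le_trans (hp b _) (hinc b x _ _ (ltW bx) xW); lra.
Qed.

Lemma nondecreasing_minimizer0 h :
  (forall x y, 0 < x -> x <= y -> y <= W -> h x <= h y) -> is_minimizer W h 0.
Proof.
move=> hinc; right; split=> // x /andP[x0 xW] e e0.
exists x => // y y0 yx yW; apply: le_trans (hinc y x y0 (ltW yx) xW) _.
by rewrite lerDl ltW.
Qed.

(* Near [0+], the nondecreasing [F] stays within [e / al] of its infimum. *)
Lemma nearly_nonincreasing0_comb (F G : R -> R) (al be b : R) :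
  0 < al -> 0 <= be -> 0 < b ->
  (forall x, 0 < x <= W -> 0 <= F x) -> unimodal_at F 0 -> unimodal_at G b ->
  nearly_nonincreasing0 (fun x => al * F x + be * G x).
Proof.
move=> al0 be0 b0 F0 [_ Finc] [Gdec _] e e0.
pose S := [set F x | x in [set x | 0 < x <= W]].
have S_inf : has_inf S.
  split; first by exists (F W); exists W => //=; rewrite W_gt0 lexx.
  by exists 0 => _ [x x0W <-]; exact: F0.
have [_ [x0 /andP[x0_gt0 x0W] <-] Fx0] := inf_adherent (divr_gt0 e0 al0) S_inf.
exists (Num.min x0 b); first by rewrite lt_min x0_gt0 b0.
move=> z y z0 zy; rewrite lt_min => /andP[yx0 yb] /=.
have Fz : inf S <= F z by apply: (ge_inf S_inf.2); exists z => //=; lra.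
have Fy : F y <= F x0 by apply: Finc => //; lra.
have Gy : G y <= G z by apply: Gdec => //; lra.
have F_incr : al * (F y - F z) <= e.
  by rewrite mulrC -ler_pdivlMr //; lra.
have G_decr : be * (G y - G z) <= 0 by apply: mulr_ge0_le0 => //; lra.
lra.
Qed.

Lemma continuous_within_itv (h : R -> R) a b : 0 < a -> b <= W ->
  (forall x, 0 < x <= W -> {for x, continuous h}) ->
  {within `[a, b], continuous h}.
Proof.
move=> a0 bW hc; apply/continuous_in_subspaceT => z /[1!inE].
by rewrite /= in_itv /= => /andP[az zb]; apply: hc; lra.
Qed.

Lemma limsup0_le_of_no_min h b : 0 < b <= W ->
  (forall x, 0 < x <= W -> {for x, continuous h}) ->
  (forall x y, 0 < x -> b <= x -> x <= y -> y <= W -> h x <= h y) ->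
  nearly_nonincreasing0 h ->
  (forall p, 0 < p <= b -> exists2 q, 0 < q <= b & h q < h p) ->
  forall x, 0 < x <= W -> limsup0_le h (h x).
Proof.
move=> /andP[b0 bW] hc hinc hnear no_min x /andP[x0 xW] e e0.
have [d d0 hd] := hnear e e0.
exists (Num.min d b); first by rewrite lt_min d0 b0.
move=> y y0; rewrite lt_min => /andP[yd yb] yW.
pose x' := Num.min x b.
have x'b : x' <= b by rewrite ge_min lexx orbT.
have hx' : h x' <= h x.
  rewrite /x'; have [xb|bx] := leP x b; first by rewrite lexx.
  by apply: hinc => //; exact: ltW.
apply: le_trans (_ : h x' + e <= h x + e); last by rewrite lerD2r.
have [x'y|yx'] := ltP x' y.
  by apply: hd (ltW x'y) yd; rewrite lt_min x0 b0.
(* [h] attains its minimum over [[y, b]] at [p], which is beaten by some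
   [q < y]; near [0+], [h y] is then almost below [h q < h p <= h x']. *)
have [p pI hp] := EVT_min (ltW yb) (continuous_within_itv y0 bW hc).
move: (pI); rewrite in_itv /= => /andP[yp pb].
have [q /andP[q0 qb] hqp] := no_min p (ltac:(apply/andP; split; lra)).
have qy : q < y.
  rewrite ltNge; apply/negP => yq.
  by have := hp q; rewrite in_itv /= yq qb => /(_ isT); rewrite leNgt hqp.
apply: le_trans (hd q y q0 (ltW qy) yd) _; rewrite lerD2r.
by apply: le_trans (ltW hqp) (hp x' _); rewrite in_itv /= yx' x'b.
Qed.

Lemma exists_minimizer_left h b : 0 < b <= W ->
  (forall x, 0 < x <= W -> {for x, continuous h}) ->
  (forall x y, 0 < x -> b <= x -> x <= y -> y <= W -> h x <= h y) ->
  nearly_nonincreasing0 h ->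
  exists2 m, is_minimizer W h m & 0 <= m <= b.
Proof.
move=> b0W hc hinc hnear.
have [[p p0b hp]|no_min] :=
  pselect (exists2 p, 0 < p <= b & forall q, 0 < q <= b -> h p <= h q).
  exists p; first by apply: is_minimizer_of_min_on_left hp hinc; case/andP: b0W.
  by move: p0b => /andP[p0 ->]; rewrite ltW.
exists 0; last by case/andP: b0W => b0 _; rewrite lexx ltW.
right; split=> //; apply: limsup0_le_of_no_min b0W hc hinc hnear _.
move=> p p0b; apply: contrapT => no_q; apply: no_min; exists p => // q q0b.
by rewrite leNgt; apply/negP => hqp; apply: no_q; exists q.
Qed.

Lemma minimizer_unimodal_sum (f g : R -> R) (al be a b : R) :
  0 < al -> 0 < be -> 0 <= a <= b -> b <= W ->
  (forall x, 0 < x <= W -> {for x, continuous f}) ->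
  (forall x, 0 < x <= W -> {for x, continuous g}) ->
  (forall x, 0 < x <= W -> 0 <= f x) ->
  unimodal_at f a -> unimodal_at g b ->
  exists2 m, is_minimizer W (fun w => al * f w + be * g w) m & a <= m <= b.
Proof.
move=> al0 be0 /andP[a0 ab] bW cf cg f0 f_uni g_uni.
have [fdec finc] := f_uni; have [gdec ginc] := g_uni.
set h := fun w => al * f w + be * g w.
have hc x : 0 < x <= W -> {for x, continuous h}.
  by move=> xW; apply: cvgD; apply: cvgM; [exact: cvg_cst | exact: cf |
    exact: cvg_cst | exact: cg].
have hmono x y : f x <= f y -> g x <= g y -> h x <= h y.
  by move=> fxy gxy; rewrite lerD // ler_wpM2l // ltW.
have hinc x y : 0 < x -> b <= x -> x <= y -> y <= W -> h x <= h y.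
  by move=> *; apply: hmono; [apply: finc | apply: ginc] => //; lra.
have [a_gt0|a_le0] := ltP 0 a.
  have [p pI hp] := EVT_min ab (continuous_within_itv a_gt0 bW hc).
  move: (pI); rewrite in_itv /= => /andP[ap pb].
  exists p; rewrite ?ap ?pb //.
  apply: (is_minimizer_of_min_on_left _ bW _ hinc).
    by rewrite (lt_le_trans a_gt0 ap) pb.
  move=> q /andP[q0 qb]; have [qa|aq] := ltP q a.
    apply: le_trans (hp a _) _; first by rewrite in_itv /= lexx.
    by apply: hmono; [apply: fdec | apply: gdec] => //; lra.
  by apply: hp; rewrite in_itv /= aq.
have a_eq0 : a = 0 by lra.
rewrite a_eq0 in f_uni ab *.
have [b_gt0|b_le0] := ltP 0 b.
  apply: exists_minimizer_left hinc _; [lra | exact: hc |].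
  exact: nearly_nonincreasing0_comb (ltW be0) b_gt0 f0 f_uni g_uni.
exists 0; last by rewrite lexx ab.
apply: nondecreasing_minimizer0 => x y x0 xy yW.
by apply: hmono; [apply: finc | apply: ginc] => //; lra.
Qed.

Lemma minimizer_sum_between (f g : R -> R) (al be wf wg : R) :
  0 < al -> 0 < be ->
  (forall x, 0 < x <= W -> {for x, continuous f}) ->
  (forall x, 0 < x <= W -> {for x, continuous g}) ->
  (forall x, 0 < x <= W -> 0 <= f x) -> (forall x, 0 < x <= W -> 0 <= g x) ->
  quasi_convex_on W f -> quasi_convex_on W g ->
  is_minimizer W f wf -> is_minimizer W g wg ->
  exists2 m, is_minimizer W (fun w => al * f w + be * g w) m &
    Num.min wf wg <= m <= Num.max wf wg.
Proof.
move=> al0 be0 cf cg f0 g0 /quasi_convex_unimodal[mf f_uni]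
  /quasi_convex_unimodal[mg g_uni] wf_min wg_min.
have f_uni_wf := unimodal_at_minimizer f_uni wf_min.
have g_uni_wg := unimodal_at_minimizer g_uni wg_min.
have /andP[wf0 wfW] := is_minimizer_ge0_le wf_min.
have /andP[wg0 wgW] := is_minimizer_ge0_le wg_min.
have [wfg|wgf] := leP wf wg.
  have wf_wg : 0 <= wf <= wg by rewrite wf0 wfg.
  exact: minimizer_unimodal_sum al0 be0 wf_wg wgW cf cg f0 f_uni_wf g_uni_wg.
have wg_wf : 0 <= wg <= wf by rewrite wg0 ltW.
have -> : (fun w => al * f w + be * g w) = (fun w => be * g w + al * f w).
  by apply/funext => w; rewrite addrC.
exact: minimizer_unimodal_sum be0 al0 wg_wf wfW cg cf g0 g_uni_wg f_uni_wf.
Qed.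

End MinimizerOnHalfOpenInterval.

Theorem theorem2 (R : realType) (P : probability R R)
    (theta thetaR sigma Pw snu2 : R) :
  symmetric_law P ->
  0 < thetaR -> 0 < theta -> theta <= thetaR ->
  0 < sigma -> 0 < Pw -> 0 <= snu2 ->
  let W := 2 * pi / thetaR in
  (* the asymptotic variances are well defined on (0, W] *)
  (forall w, 0 < w <= W -> charfun P (sigma * w) != 0) ->
  (forall w, 0 < w <= W -> derivable (fun s : R => charfun P (s * w)) sigma 1) ->
  (forall w, 0 < w <= W -> dphi_dsigma P sigma w != 0) ->
  (* differentiable and quasi-convex on (0, W] *)
  (forall w, 0 < w <= W -> derivable (AsV_theta P sigma Pw snu2) w 1) ->
  (forall w, 0 < w <= W -> derivable (AsV_sigma P sigma Pw snu2) w 1) ->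
  quasi_convex_on W (AsV_theta P sigma Pw snu2) ->
  quasi_convex_on W (AsV_sigma P sigma Pw snu2) ->
  forall wt ws,
    is_minimizer W (AsV_theta P sigma Pw snu2) wt ->
    is_minimizer W (AsV_sigma P sigma Pw snu2) ws ->
    exists2 wg, is_minimizer W (AsV_gamma P theta sigma Pw snu2) wg &
      Num.min wt ws <= wg <= Num.max wt ws.
Proof.
move=> _ thetaR0 theta0 _ sigma0 Pw0 snu20 W _ _ _ dT dS qT qS wt ws mT mS.
have W0 : 0 < W by rewrite /W divr_gt0 // mulr_gt0 // pi_gt0.
set gamma := theta ^+ 2 / sigma ^+ 2.
have gamma0 : 0 < gamma by rewrite divr_gt0 // exprn_gt0.
set c := 4 * gamma / sigma ^+ 2.
have c0 : 0 < c by rewrite divr_gt0 ?exprn_gt0 // mulr_gt0.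
have -> : AsV_gamma P theta sigma Pw snu2 = fun w =>
    c * AsV_theta P sigma Pw snu2 w + c * gamma * AsV_sigma P sigma Pw snu2 w.
  by apply/funext => w; rewrite /AsV_gamma -/gamma -/c mulrDr mulrA.
apply: (minimizer_sum_between W0 c0 (mulr_gt0 c0 gamma0)) => //.
- by move=> x /dT /derivable1_diffP /differentiable_continuous.
- by move=> x /dS /derivable1_diffP /differentiable_continuous.
- by move=> x _; exact: AsV_theta_ge0 (ltW Pw0) snu20.
- by move=> x _; exact: AsV_sigma_ge0 (ltW Pw0) snu20.
Qed.
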